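(* Every 4-regular graph with girth at least six has a strong edge-coloring using at most 22 colors.
   Context: A strong edge-coloring of a graph is a proper edge-coloring in which, in addition, no two edges of the same color lie on a common path of length three. The girth of a graph is the length of its shortest cycle (a loop counts as a cycle of length 1 and a pair of parallel edges as a cycle of length 2). *)

From mathcomp Require Import all_boot.
Set Implicit Arguments. Unset Strict Implicit. Unset Printing Implicit Defensive.

Definition simple_graph (T : finType) (g : rel T) : Prop :=
  symmetric g /\ irreflexive g.

Definition regular (T : finType) (g : rel T) (k : nat) : Prop :=
  forall x : T, #|[set y | g x y]| = k.

(* Loops / parallel edges (cycles of length 1, 2) do not exist in a simple graph. *)
Definition girth_at_least (T : finType) (g : rel T) (n : nat) : Prop :=
  forall s : seq T, uniq s -> 3 <= size s -> cycle g s -> n <= size s.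

(* An edge colouring with colours in 'I_k: a function on ordered pairs that is
   symmetric on edges, so that it gives a colour to each (unordered) edge. *)
Definition edge_colouring (T : finType) (g : rel T) (k : nat)
  (c : T -> T -> 'I_k) : Prop :=
  forall x y, g x y -> c x y = c y x.

Definition proper_edge_colouring (T : finType) (g : rel T) (k : nat)
  (c : T -> T -> 'I_k) : Prop :=
  forall a b d, g a b -> g b d -> a != d -> c a b != c b d.

(* Strong: proper, and no two edges of the same colour lie on a common path of
   length three a-b-d-f (distinct vertices); the only pair not already covered
   by properness is the pair of end edges ab, df. *)
Definition strong_edge_colouring (T : finType) (g : rel T) (k : nat)
  (c : T -> T -> 'I_k) : Prop :=
  [/\ edge_colouring g c, proper_edge_colouring g c &
      forall a b d f, uniq [:: a; b; d; f] -> g a b -> g b d -> g d f ->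
        c a b != c d f].

(* Strong edge colourings of g are the proper colourings of the conflict relation on
   edges (sharing a vertex or being joined by an edge), and in a k-regular graph an edge
   conflicts with at most 2k(k-1) others. Pick a root in every component and, for each
   neighbour a of a root, an edge from a to another vertex than the root: by girth >= 6
   these edges form an induced matching, so they can all get one colour. The remaining
   edges are coloured greedily, farthest from the roots first. When an edge uv with
   depth u <= depth v is coloured, either u is a root, and the k matching edges at the
   neighbours of u conflict with uv but block a single colour, or the k-1 unmatched
   edges at the parent of u are still uncoloured. Either way at most (k-1)(2k-1)
   colours are blocked, that is 21 for k = 4. *)

From mathcomp Require Import all_boot zify.
Set Implicit Arguments. Unset Strict Implicit. Unset Printing Implicit Defensive.

Lemma card_bigcup_leq (I T : finType) (D : {pred I}) (F : I -> {set T}) :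
  #|\bigcup_(i in D) F i| <= \sum_(i in D) #|F i|.
Proof.
elim/big_rec2: _ => [|i U s _ leUs]; first by rewrite cards0.
by apply: leq_trans (leq_card_setU _ _).1 _; rewrite leq_add2l.
Qed.

Section Greedy.

Variables (I : finType) (adj : rel I) (K : nat).
Hypotheses (adj_sym : symmetric adj) (adj_irr : irreflexive adj).

Definition proper_on (c : I -> 'I_K) (D : {set I}) :=
  forall A B, A \in D -> B \in D -> adj A B -> c A != c B.

Lemma proper_on_extend (c : I -> 'I_K) (D : {set I}) (A : I) :
  A \notin D -> proper_on c D -> #|c @: [set B in D | adj A B]| < K ->
  exists2 c' : I -> 'I_K, {in D, c' =1 c} & proper_on c' (A |: D).
Proof.
set F := c @: _ => AnD c_pr smallF.
have [col] : exists col, col \in ~: F.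
  by apply/card_gt0P; move: (cardsC F); rewrite card_ord; lia.
rewrite inE => Fcol.
have colP B : B \in D -> adj A B -> col != c B.
  by move=> DB adjAB; apply: contraNneq Fcol => ->; rewrite imset_f // inE DB.
exists (fun B => if B == A then col else c B).
  by move=> B DB; case: eqP => // eqBA; rewrite -eqBA DB in AnD.
move=> B1 B2 /setU1P[->|DB1] /setU1P[->|DB2]; rewrite ?eqxx.
- by rewrite adj_irr.
- by rewrite (negPf (memPn AnD _ DB2)); apply: colP.
- by rewrite (negPf (memPn AnD _ DB1)) adj_sym eq_sym; apply: colP.
- by rewrite (negPf (memPn AnD _ DB1)) (negPf (memPn AnD _ DB2)); apply: c_pr.
Qed.

Variables (P : {set I}) (c0 : I -> 'I_K) (rank : I -> nat).
Hypothesis c0_proper : proper_on c0 P.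
(* Elements are coloured by decreasing rank, so the neighbours outside P that are
   already coloured when A is have rank at least rank A. *)
Hypothesis earlier_conflicts_bound : forall A, A \notin P ->
  #|[set B | [&& B \notin P, adj A B & rank A <= rank B]]| +
  #|c0 @: [set B in P | adj A B]| < K.

Definition rank_closed (S : {set I}) :=
  forall A B, A \in S -> B \notin P -> rank A < rank B -> B \in S.

Lemma colour_rank_closed (S : {set I}) : S \subset ~: P -> rank_closed S ->
  exists2 c : I -> 'I_K, {in P, c =1 c0} & proper_on c (P :|: S).
Proof.
have [n] := ubnP #|S|; elim: n S => // n IH S; rewrite ltnS => cardS sSP closedS.
have [-> | [A SA]] := set_0Vmem S; first by exists c0; rewrite ?setU0.
have [A0 SA0 A0_min] : exists2 A0, A0 \in S & forall B, B \in S -> rank A0 <= rank B.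
  by case: (arg_minnP rank SA) => A0; exists A0.
have PA0 : A0 \notin P by have := subsetP sSP A0 SA0; rewrite inE.
have [|||c cP c_pr] := IH (S :\ A0).
- by move: cardS; rewrite (cardsD1 A0) SA0.
- exact: subset_trans (subsetDl _ _) sSP.
- move=> A1 B; rewrite !inE => /andP[_ SA1] PB ltA1B; rewrite (closedS A1) // andbT.
  by apply: contraTneq ltA1B => ->; rewrite -leqNgt A0_min.
have [||c' c'c c'_pr] := proper_on_extend (A := A0) (D := P :|: S :\ A0) _ c_pr.
- by rewrite !inE negb_or PA0 eqxx.
- set L := [set B | [&& B \notin P, adj A0 B & rank A0 <= rank B]].
  apply: leq_ltn_trans (earlier_conflicts_bound PA0).
  have sub : c @: [set B in P :|: S :\ A0 | adj A0 B] \subset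
             c0 @: [set B in P | adj A0 B] :|: c @: L.
    apply/subsetP=> col /imsetP[B]; rewrite !inE => /andP[/orP[PB | /andP[_ SB]] adjB] ->.
      by rewrite cP // imset_f // inE PB.
    have PBn : B \notin P by have := subsetP sSP B SB; rewrite inE.
    by rewrite orbC imset_f // inE PBn adjB A0_min.
  apply: leq_trans (subset_leq_card sub) _.
  apply: leq_trans (leq_card_setU _ _).1 _.
  by rewrite addnC leq_add2r leq_imset_card.
exists c'; first by move=> B PB; rewrite c'c ?cP // inE PB.
by rewrite setUCA setD1K in c'_pr.
Qed.

Lemma greedy_colouring : exists c : I -> 'I_K, forall A B, adj A B -> c A != c B.
Proof.
have [|c _ c_pr] := @colour_rank_closed (~: P) (subxx _).
  by move=> A B _ PB _; rewrite inE.
by exists c => A B; apply: c_pr; rewrite setUCr inE.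
Qed.

End Greedy.

Section EdgeConflicts.

Variables (T : finType) (g : rel T).
Implicit Types (A B : {set T}) (a b d f x y z : T).

Definition edges : {set {set T}} :=
  [set A | [exists x, exists y, g x y && (A == [set x; y])]].

Definition star (z : T) : {set {set T}} := [set A in edges | z \in A].

Definition touch (A B : {set T}) : bool :=
  [exists x in A, exists y in B, (x == y) || g x y].

Definition conflict (A B : {set T}) : bool :=
  [&& A \in edges, B \in edges, A != B & touch A B].

Lemma edgesP A : reflect (exists x y, g x y /\ A = [set x; y]) (A \in edges).
Proof.
rewrite inE; apply: (iffP existsP) => [[x /existsP[y /andP[gxy /eqP->]]]|].
  by exists x, y.
by case=> x [y [gxy ->]]; exists x; apply/existsP; exists y; rewrite gxy eqxx.
Qed.

Lemma mem_edges x y : g x y -> [set x; y] \in edges.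
Proof. by move=> gxy; apply/edgesP; exists x, y. Qed.

Lemma in_star z A : (A \in star z) = (A \in edges) && (z \in A).
Proof. by rewrite [in LHS]in_set. Qed.

Lemma mem_star x y : g x y -> [set x; y] \in star x.
Proof. by move=> gxy; rewrite in_star mem_edges // set21. Qed.

Lemma touchP A B :
  reflect (exists x y, [/\ x \in A, y \in B & (x == y) || g x y]) (touch A B).
Proof.
apply: (iffP existsP) => [[x /andP[Ax /existsP[y /andP[By xy]]]]|[x [y [Ax By xy]]]].
  by exists x, y.
by exists x; rewrite Ax; apply/existsP; exists y; rewrite By.
Qed.

Hypotheses (g_sym : symmetric g) (g_irr : irreflexive g).

Lemma touchC : symmetric touch.
Proof.
suff touchC A B : touch A B -> touch B A by move=> A B; apply/idP/idP; apply: touchC.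
case/touchP=> x [y [Ax By xy]]; apply/touchP; exists y, x.
by rewrite eq_sym g_sym.
Qed.

Lemma conflictC : symmetric conflict.
Proof. by move=> A B; rewrite /conflict andbCA eq_sym touchC. Qed.

Lemma conflict_irr : irreflexive conflict.
Proof. by move=> A; rewrite /conflict eqxx !andbF. Qed.

Lemma conflict_set2 a b d f : g a b -> g d f -> [set a; b] != [set d; f] ->
  (b == d) || g b d -> conflict [set a; b] [set d; f].
Proof.
move=> gab gdf neq bd; rewrite /conflict !mem_edges //= neq.
by apply/touchP; exists b, d; rewrite set22 set21.
Qed.

Lemma strong_of_conflict_free K (col : {set T} -> 'I_K) :
  (forall A B, conflict A B -> col A != col B) ->
  strong_edge_colouring g (fun x y => col [set x; y]).
Proof.
have neq_edges a b d f : a \notin [set d; f] -> [set a; b] != [set d; f].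
  by move=> adf; apply: contraNneq adf => <-; rewrite set21.
move=> col_pr; split=> [x y _ | a b d gab gbd ad | a b d f uniq_abdf gab gbd gdf].
- by rewrite setUC.
- apply/col_pr/conflict_set2; rewrite ?eqxx //; apply: neq_edges.
  by rewrite !inE negb_or ad andbT; apply: contraTneq gab => ->; rewrite g_irr.
- apply/col_pr/conflict_set2; rewrite ?gbd ?orbT //; apply: neq_edges.
  by move: uniq_abdf; rewrite /= !inE !negb_or => /and4P[/and3P[_ -> ->]].
Qed.

Lemma connect_edge A x y : A \in edges -> x \in A -> y \in A -> connect g x y.
Proof.
case/edgesP=> u [v [guv ->]] /set2P[]-> /set2P[]->; rewrite ?connect0 ?connect1 //.
by rewrite g_sym.
Qed.

Lemma connect_touch A B x y : A \in edges -> B \in edges -> touch A B ->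
  x \in A -> y \in B -> connect g x y.
Proof.
move=> EA EB /touchP[x' [y' [Ax' By' xy']]] Ax By.
apply: connect_trans (connect_edge EA Ax Ax') _.
apply: connect_trans (connect_edge EB By' By).
by case/orP: xy' => [/eqP->|/connect1].
Qed.

Variable k : nat.
Hypothesis g_reg : regular g k.

Lemma star_image z : star z = [set [set z; y] | y in [set y | g z y]].
Proof.
apply/setP=> A; apply/idP/imsetP => [|[y]]; last by rewrite inE => gzy ->; exact: mem_star.
rewrite inE => /andP[/edgesP[x [y [gxy ->]]] /set2P[]->]; first by exists y; rewrite ?inE.
by exists x; rewrite 1?setUC // inE g_sym.
Qed.

Lemma card_star z : #|star z| = k.
Proof.
rewrite star_image card_in_imset ?g_reg // => y1 y2; rewrite !inE => gzy1 _ eq_y.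
have /set2P[zy1|//] : y1 \in [set z; y2] by rewrite -eq_y set22.
by rewrite -zy1 g_irr in gzy1.
Qed.

Lemma card_star_D1 z y : g z y -> #|star z :\ [set z; y]| = k.-1.
Proof.
by move=> gzy; move: (cardsD1 [set z; y] (star z)); rewrite mem_star // card_star => ->.
Qed.

Definition conflicts_via w w' : {set {set T}} :=
  (star w :\ [set w; w']) :|:
  \bigcup_(y in [set y | g w y] :\ w') (star y :\ [set w; y]).

Lemma card_conflicts_via w w' : g w w' -> #|conflicts_via w w'| <= k.-1 * k.
Proof.
move=> gww'; apply: leq_trans (leq_card_setU _ _).1 _; rewrite card_star_D1 //.
suff : #|\bigcup_(y in [set y | g w y] :\ w') (star y :\ [set w; y])| <= k.-1 * k.-1.
  by nia.
apply: leq_trans (card_bigcup_leq _ _) _.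
rewrite (eq_bigr (fun _ => k.-1)) => [|y]; last first.
  by rewrite !inE => /andP[_ gwy]; rewrite setUC card_star_D1 // g_sym.
rewrite sum_nat_const.
by move: (cardsD1 w' [set y | g w y]); rewrite g_reg inE gww' => ->.
Qed.

Lemma mem_conflicts_via w w' B y : g w w' -> B \in edges -> B != [set w; w'] ->
  y \in B -> (w == y) || g w y -> B \in conflicts_via w w' :|: conflicts_via w' w.
Proof.
move=> gww' EB nBw yB /orP[/eqP wy | gwy].
  by rewrite !in_setU in_setD1 nBw in_star EB wy yB.
have [yw' | nyw'] := eqVneq y w'.
  by apply/setUP; right; apply/setUP; left; rewrite in_setD1 setUC nBw in_star EB -yw' yB.
have [BwY | nBwy] := eqVneq B [set w; y].
  by rewrite !in_setU in_setD1 nBw BwY mem_star.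
apply/setUP; left; apply/setUP; right; apply/bigcupP; exists y.
  by rewrite !inE nyw'.
by rewrite in_setD1 nBwy in_star EB yB.
Qed.

Lemma card_conflicts u v : g u v -> #|[set B | conflict [set u; v] B]| <= (k.-1 * k).*2.
Proof.
move=> guv.
have sub : [set B | conflict [set u; v] B] \subset conflicts_via u v :|: conflicts_via v u.
  apply/subsetP=> B; rewrite inE => /and4P[_ EB nAB /touchP[x [y [/set2P[]-> yB xy]]]].
    by apply: mem_conflicts_via guv EB _ yB xy; rewrite eq_sym.
  rewrite setUC; apply: mem_conflicts_via EB _ yB xy; first by rewrite g_sym.
  by rewrite setUC eq_sym.
apply: leq_trans (subset_leq_card sub) _; apply: leq_trans (leq_card_setU _ _).1 _.
by rewrite -addnn leq_add // card_conflicts_via // g_sym.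
Qed.

End EdgeConflicts.

Section RootDistance.

Variables (T : finType) (g : rel T).
Implicit Types (x y : T).

Definition ball n : {set T} :=
  iter n (fun S => S :|: [set x | [exists y in S, g x y]]) [set root g y | y : T].

Lemma ball_succ n x y : g x y -> y \in ball n -> x \in ball n.+1.
Proof.
by move=> gxy yn; rewrite !inE; apply/orP; right; apply/existsP; exists y; rewrite yn.
Qed.

Lemma path_ball p x : path g x p -> last x p \in ball 0 -> x \in ball (size p).
Proof. by elim: p x => [|y p IH] x //= /andP[gxy /IH yp] /yp; apply: ball_succ. Qed.

Lemma in_some_ball x : exists n, x \in ball n.
Proof.
case/connectP: (connect_root g x) => p xp rootx; exists (size p).
by apply: path_ball xp _; rewrite -rootx imset_f.
Qed.

Definition depth x : nat := ex_minn (in_some_ball x).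

Lemma in_ball_depth x : x \in ball (depth x).
Proof. by rewrite /depth; case: ex_minnP. Qed.

Lemma depth_min n x : x \in ball n -> depth x <= n.
Proof. by rewrite /depth; case: ex_minnP => m _; apply. Qed.

Lemma depth_edge x y : g x y -> depth x <= (depth y).+1.
Proof. by move=> gxy; apply/depth_min/(ball_succ gxy)/in_ball_depth. Qed.

Lemma depth_parent x : 0 < depth x -> exists2 y, g x y & depth y < depth x.
Proof.
have := in_ball_depth x; have := @depth_min^~ x.
case: (depth x) => // n min_n; rewrite !inE => /orP[/min_n | /existsP[y /andP[yn gxy]]].
  by rewrite ltnn.
by exists y => //; apply: depth_min.
Qed.

Hypothesis g_sym : symmetric g.

Lemma depth_eq0 x : depth x = 0 -> root g x = x.
Proof.
move=> dx0; have := in_ball_depth x; rewrite dx0 => /imsetP[y _ ->].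
exact: root_root (sym_connect_sym g_sym) y.
Qed.

End RootDistance.

Section GirthSix.

Variables (T : finType) (g : rel T) (k : nat).
Hypotheses (g_sym : symmetric g) (g_irr : irreflexive g) (g_reg : regular g k).
Hypotheses (k_gt1 : 1 < k) (g_girth : girth_at_least g 6).
Implicit Types (a b c d e p r u v x y : T) (A B : {set T}).

Lemma edge_neq x y : g x y -> x != y.
Proof. by apply: contraTneq => ->; rewrite g_irr. Qed.

Lemma no_triangle a b c : g a b -> g b c -> g c a -> False.
Proof.
move=> gab gbc gca; have := g_girth (s := [:: a; b; c]).
rewrite /= !inE !negb_or (edge_neq gab) (edge_neq gbc) [a == c]eq_sym (edge_neq gca).
by rewrite gab gbc gca => /(_ isT isT isT).
Qed.

Lemma no_4cycle a b c d : g a b -> g b c -> g c d -> g d a -> a != c -> b != d -> False.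
Proof.
move=> gab gbc gcd gda ac bd; have := g_girth (s := [:: a; b; c; d]).
rewrite /= !inE !negb_or (edge_neq gab) (edge_neq gbc) (edge_neq gcd) [a == d]eq_sym.
by rewrite (edge_neq gda) ac bd gab gbc gcd gda => /(_ isT isT isT).
Qed.

Lemma no_5cycle a b c d e : g a b -> g b c -> g c d -> g d e -> g e a -> False.
Proof.
move=> gab gbc gcd gde gea.
have ac : a != c by apply/eqP=> eq_ac; subst c; exact: no_triangle gcd gde gea.
have ad : a != d by apply/eqP=> eq_ad; subst d; exact: no_triangle gab gbc gcd.
have bd : b != d by apply/eqP=> eq_bd; subst d; exact: no_triangle gab gde gea.
have be : b != e by apply/eqP=> eq_be; subst e; exact: no_triangle gbc gcd gde.
have ce : c != e by apply/eqP=> eq_ce; subst e; exact: no_triangle gab gbc gea.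
have := g_girth (s := [:: a; b; c; d; e]).
rewrite /= !inE !negb_or (edge_neq gab) (edge_neq gbc) (edge_neq gcd) (edge_neq gde).
rewrite [a == e]eq_sym (edge_neq gea) ac ad bd be ce.
by rewrite gab gbc gcd gde gea => /(_ isT isT isT).
Qed.

Definition outer a := odflt a [pick y | g a y && (y != root g a)].

Lemma outerP a : g a (outer a) && (outer a != root g a).
Proof.
rewrite /outer; case: pickP => //= none; have: [set y | g a y] \subset [set root g a].
  by apply/subsetP=> y; rewrite !inE; have := none y; case: (g a y) => // /negbFE.
by move/subset_leq_card; rewrite cards1 g_reg leqNgt k_gt1.
Qed.

Definition root_matching : {set {set T}} :=
  [set [set a; outer a] | a in [set a | g (root g a) a]].
Local Notation M := root_matching.

Lemma root_matching_sub : M \subset edges g.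
Proof. by apply/subsetP=> _ /imsetP[a _ ->]; rewrite mem_edges //; case/andP: (outerP a). Qed.

Lemma root_matching_induced A B : A \in M -> B \in M ->
  A != B -> ~~ touch g A B.
Proof.
move=> MA MB neqAB; apply/negP => touchAB.
have EA := subsetP root_matching_sub A MA; have EB := subsetP root_matching_sub B MB.
case/imsetP: MA EA neqAB touchAB => a; rewrite inE => gra -> EA.
case/imsetP: MB EB => b; rewrite inE => grb -> EB neqAB touchAB.
have neq_ab : a != b by apply: contraNneq neqAB => ->.
have same_root : root g a = root g b.
  by apply/(rootP (sym_connect_sym g_sym)); apply: connect_touch touchAB _ _; rewrite ?set21.
move: (outer a) (outer b) (outerP a) (outerP b) touchAB => x y /andP[gax xr] /andP[gby yr].
rewrite same_root in gra xr; move: (root g b) gra xr grb yr => r gra xr grb yr.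
have grb' : g b r by rewrite g_sym.
have rx : r != x by rewrite eq_sym.
have ry : r != y by rewrite eq_sym.
case/touchP=> w [z [/set2P[]-> /set2P[]-> /orP[/eqP eq_wz | gwz]]].
- by rewrite eq_wz eqxx in neq_ab.
- exact: no_triangle gra gwz grb'.
- by subst y; apply: no_triangle grb gby _; rewrite g_sym.
- by apply: no_4cycle gra gwz _ grb' ry neq_ab; rewrite g_sym.
- by subst x; exact: no_triangle gra gax grb'.
- exact: no_4cycle gra gax gwz grb' rx neq_ab.
- by subst y; apply: no_4cycle gra gax _ grb' rx neq_ab; rewrite g_sym.
- by apply: no_5cycle gra gax gwz _ grb'; rewrite g_sym.
Qed.

Lemma card_star_root_matching p : #|star g p :&: M| <= 1.
Proof.
rewrite leqNgt; apply/negP => /card_gt1P[A [B [/setIP[SA MA] /setIP[SB MB] neqAB]]].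
have := root_matching_induced MA MB neqAB; apply/negP; rewrite negbK.
apply/touchP; exists p, p.
by rewrite eqxx; move: SA SB; rewrite !in_star => /andP[_ ->] /andP[_ ->].
Qed.

Lemma root_edge_conflicts r a : root g r = r -> g r a ->
  k <= #|[set B in M | conflict g [set r; a] B]|.
Proof.
move=> rootr gra.
have root_nbr b : g r b -> root g b = r.
  by move=> grb; rewrite -[RHS]rootr; apply/esym/(rootP (sym_connect_sym g_sym))/connect1.
have sub : [set [set b; outer b] | b in [set b | g r b]] \subset
           [set B in M | conflict g [set r; a] B].
  apply/subsetP=> B /imsetP[b]; rewrite inE => grb ->.
  have /andP[gbx xr] := outerP b; rewrite root_nbr // in xr.
  apply/setIdP; split; first by apply: imset_f; rewrite inE root_nbr.
  have gar : g a r by rewrite g_sym.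
  rewrite setUC; apply: conflict_set2 gar gbx _ _; last by rewrite grb orbT.
  apply: contraNneq xr => eq_edges.
  have /set2P[rb|->//] : r \in [set b; outer b] by rewrite -eq_edges set22.
  by rewrite rb g_irr in grb.
apply: leq_trans (subset_leq_card sub); rewrite card_in_imset ?g_reg //.
move=> b1 b2; rewrite !inE => grb1 grb2 eq_edges.
have /set2P[//|b1x] : b1 \in [set b2; outer b2] by rewrite -eq_edges set21.
have /andP[gbx _] := outerP b2; rewrite -b1x in gbx.
by case: (no_triangle grb2 gbx); rewrite g_sym.
Qed.

Local Notation K := (k.-1 * (k.*2).-1).

(* The sum rather than the minimum of the endpoint depths: as depths of adjacent vertices
   differ by at most one, every edge at the parent of the shallower endpoint of an edge
   is strictly shallower than that edge. *)
Definition edge_depth A := \sum_(x in A) depth g x.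

Lemma edge_depth2 u v : u != v -> edge_depth [set u; v] = depth g u + depth g v.
Proof. by move=> uv; rewrite /edge_depth big_setU1 ?big_set1 ?inE. Qed.

Lemma starP p A : A \in star g p -> exists2 q, g p q & A = [set p; q].
Proof. by rewrite star_image // => /imsetP[q]; rewrite inE; exists q. Qed.

Lemma card_star_unmatched p : k.-1 <= #|star g p :\: M|.
Proof.
have := cardsID M (star g p); rewrite (card_star g_sym g_irr g_reg) => <-.
by have := card_star_root_matching p; lia.
Qed.

Lemma parent_star_shallower u v p : g u v -> g u p -> depth g p < depth g u <= depth g v ->
  star g p \subset [set B | conflict g [set u; v] B && (edge_depth B < edge_depth [set u; v])].
Proof.
move=> guv gup /andP[dpu duv]; apply/subsetP=> B /starP[q gpq ->]; rewrite inE.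
have pv : p != v by apply: contraTneq dpu => ->; rewrite -leqNgt.
apply/andP; split.
  have gvu : g v u by rewrite g_sym.
  rewrite setUC; apply: conflict_set2 gvu gpq _ _; last by rewrite gup orbT.
  apply: contraNneq pv => eq_edges.
  have /set2P[->//|pu] : p \in [set v; u] by rewrite eq_edges set21.
  by rewrite pu g_irr in gup.
rewrite !edge_depth2 ?(edge_neq guv) ?(edge_neq gpq) //.
have gqp : g q p by rewrite g_sym.
by have := depth_edge gqp; lia.
Qed.

Lemma few_earlier_conflicts A :
  #|[set B | [&& B \notin M, conflict g A B & edge_depth A <= edge_depth B]]| +
  #|(fun _ => ord0 : 'I_K.+1) @: [set B in M | conflict g A B]| < K.+1.
Proof.
set S := [set B | _]; set Nm := [set B in M | _]; set c0 := fun _ => _.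
set Nn := [set B | (B \notin M) && conflict g A B].
have S_Nn : S \subset Nn by apply/subsetP=> B; rewrite !inE => /and3P[-> ->].
have card_Nm_Nn : #|Nm| + #|Nn| = #|[set B | conflict g A B]|.
  rewrite -(cardsID M [set B | conflict g A B]).
  by congr (_ + _); apply: eq_card => B; rewrite !inE // andbC.
have c0_Nm : #|c0 @: Nm| <= 1.
  rewrite -(cards1 (ord0 : 'I_K.+1)); apply/subset_leq_card/subsetP.
  by move=> col /imsetP[B _ ->]; rewrite inE.
have := leq_imset_card c0 Nm; have := subset_leq_card S_Nn.
have [EA | nEA] := boolP (A \in edges g); last first.
  suff N0 : [set B | conflict g A B] = set0 by rewrite N0 cards0 in card_Nm_Nn; nia.
  by apply/setP=> B; rewrite !inE /conflict (negbTE nEA).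
case/edgesP: EA => u [v [guv eA]].
wlog duv : u v guv eA / depth g u <= depth g v.
  move=> wlog_uv; case: (leqP (depth g u) (depth g v)); first exact: wlog_uv guv eA.
  by move/ltnW; apply: wlog_uv; rewrite 1?g_sym // eA setUC.
have := card_conflicts g_sym g_irr g_reg guv; rewrite -eA -card_Nm_Nn.
have [du0 | du_gt0] := posnP (depth g u).
  have := root_edge_conflicts (depth_eq0 g_sym du0) guv.
  rewrite -eA -/Nm; nia.
have [p gup dpu] := depth_parent du_gt0.
have sub : star g p :\: M \subset Nn :\: S.
  apply/subsetP=> B /setDP[/(subsetP (parent_star_shallower guv gup _)) + MnB].
  rewrite dpu duv -eA !inE MnB => /(_ isT) /andP[-> ltBA] /=.
  by rewrite -ltnNge ltBA.
have := card_star_unmatched p; have := subset_leq_card sub.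
rewrite [#|Nn :\: S|]cardsD (setIidPr S_Nn); nia.
Qed.

End GirthSix.

Theorem strong_edge_colouring_girth6 (T : finType) (g : rel T) (k : nat) :
  1 < k -> simple_graph g -> regular g k -> girth_at_least g 6 ->
  exists c : T -> T -> 'I_(k.-1 * (k.*2).-1).+1, strong_edge_colouring g c.
Proof.
move=> k_gt1 [g_sym g_irr] g_reg g_girth.
have [|col col_pr] := greedy_colouring (conflictC g_sym) (@conflict_irr _ g) _
  (fun A _ => few_earlier_conflicts g_sym g_irr g_reg k_gt1 g_girth A).
  move=> A B MA MB /and4P[_ _ neqAB].
  by rewrite (negbTE (root_matching_induced g_sym g_irr g_reg k_gt1 g_girth MA MB neqAB)).
by exists (fun x y => col [set x; y]); apply: strong_of_conflict_free.
Qed.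

Theorem lemma2 (T : finType) (g : rel T) :
  simple_graph g -> regular g 4 -> girth_at_least g 6 ->
  exists c : T -> T -> 'I_22, strong_edge_colouring g c.
Proof. exact: strong_edge_colouring_girth6. Qed.
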